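(* Let $m$ be a universal probability and let $R$ be a lower-computable semi-POVM. Then: (i) there exists $c>0$ such that for every unit vector $|\psi\rangle\in\mathbb{C}^N$ and every $s\in\Sigma^*$, $\langle\psi|R(s)|\psi\rangle\le c\,m(s)$; (ii) there exists $c>0$ such that for every density matrix $\rho\in\mathrm{Her}(N)$ and every $s\in\Sigma^*$, $\operatorname{tr}(\rho R(s))\le c\,m(s)$.
   Context: $N$ is a fixed positive integer; $\Sigma^*$ is the set of finite binary strings. $\mathrm{Her}(N)$ is the set of $N\times N$ Hermitian matrices and $\mathrm{Her}_Q(N)$ those with entries in $\{a+ib:a,b\in\mathbb{Q}\}$; $A\leqslant B$ means $B-A$ is positive semi-definite. A density matrix is $\rho\in\mathrm{Her}(N)$, $0\leqslant\rho$, $\operatorname{tr}\rho=1$. A lower-computable semi-measure is a function $r:\Sigma^*\to[0,\infty)$ with $\sum_s r(s)\le 1$ such that there is a total recursive $f:\mathbb{N}\times\Sigma^*\to\mathbb{Q}$ with $\lim_{n}f(n,s)=r(s)$ and $f(n,s)\le f(n+1,s)$ for all $n,s$. A universal probability is a lower-computable semi-measure $m$ such that for every lower-computable semi-measure $r$ there is $c>0$ with $c\,r(s)\le m(s)$ for all $s$. A semi-POVM on $\Sigma^*$ is a map $R:\Sigma^*\to\mathrm{Her}(N)$ with $0\leqslant R(s)$ for all $s$ and $\sum_s R(s)\leqslant I$. A lower-computable semi-POVM is a semi-POVM $R$ for which there is a total recursive $f:\mathbb{N}\times\Sigma^*\to\mathrm{Her}_Q(N)$ with $\lim_{n}f(n,s)=R(s)$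 and $f(n,s)\leqslant R(s)$ for all $n,s$. *)

From HB Require Import structures.
From mathcomp Require Import all_boot all_order all_algebra.
From mathcomp Require Import reals complex.

Set Implicit Arguments.
Unset Strict Implicit.
Unset Printing Implicit Defensive.

Import Order.TTheory GRing.Theory Num.Theory.
Local Open Scope ring_scope.

Inductive mucode : Type :=
| MZero
| MSucc
| MProj of nat
| MComp of mucode & seq mucode
| MPrimRec of mucode & mucode
| MMu of mucode.

Inductive mueval : mucode -> seq nat -> nat -> Prop :=
| ev_zero xs : mueval MZero xs 0
| ev_succ xs : mueval MSucc xs (nth 0 xs 0).+1
| ev_proj i xs : mueval (MProj i) xs (nth 0 xs i)
| ev_comp f gs xs ys y :
    muevalL gs xs ys -> mueval f ys y -> mueval (MComp f gs) xs y
| ev_prim0 b st xs y :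
    mueval b xs y -> mueval (MPrimRec b st) (0 :: xs) y
| ev_primS b st n xs y z :
    mueval (MPrimRec b st) (n :: xs) y ->
    mueval st (n :: y :: xs) z ->
    mueval (MPrimRec b st) (n.+1 :: xs) z
| ev_mu f xs n :
    mueval f (n :: xs) 0 ->
    (forall k, (k < n)%N -> exists v, mueval f (k :: xs) v.+1) ->
    mueval (MMu f) xs n
with muevalL : seq mucode -> seq nat -> seq nat -> Prop :=
| evL_nil xs : muevalL [::] xs [::]
| evL_cons g gs xs y ys :
    mueval g xs y -> muevalL gs xs ys -> muevalL (g :: gs) xs (y :: ys).

Definition pairN (a b : nat) : nat := (((a + b) * (a + b).+1) %/ 2 + b)%N.

(* Bijective base-2 code of a binary string (first bit least significant). *)
Definition strcode (s : seq bool) : nat :=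
  foldr (fun (b : bool) acc => (acc.*2 + (1 + b))%N) 0%N s.

Fixpoint listcode (l : seq nat) : nat :=
  if l is x :: l' then (pairN x (listcode l')).+1 else 0%N.

Definition repQ (v : nat) (q : rat) : Prop :=
  exists p m d : nat,
    v = pairN (pairN p m) d /\ (0 < d)%N /\ q = (p%:R - m%:R) / d%:R.

Definition total_recursive (A B : Type) (encA : A -> nat)
    (repB : nat -> B -> Prop) (f : A -> B) : Prop :=
  exists e : mucode, forall a, exists v, mueval e [:: encA a] v /\ repB v (f a).

Definition enc_ns (p : nat * seq bool) : nat := pairN p.1 (strcode p.2).

(* Elements of Her_Q(N) (more generally of Q[i]^{N x N}) are given as a pair
   (Re, Im) of rational matrices; a code is the list of the 2 N^2 rational
   codes of the entries (real parts first, row-major). *)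
Definition repQMx (N : nat) (v : nat) (A : 'M[rat]_N * 'M[rat]_N) : Prop :=
  exists vs : seq nat, v = listcode vs /\ size vs = (2 * (N * N))%N /\
    forall i j : 'I_N, repQ (nth 0%N vs (i * N + j)) (A.1 i j) /\
                       repQ (nth 0%N vs (N * N + (i * N + j))) (A.2 i j).

Definition seq_cvg (K : numFieldType) (u : nat -> K) (l : K) : Prop :=
  forall e : K, 0 < e -> exists n0, forall n, (n0 <= n)%N -> `|u n - l| < e.

Section MatrixDefs.
Variable C : numClosedFieldType.

Definition adjmx (m n : nat) (A : 'M[C]_(m, n)) : 'M[C]_(n, m) :=
  (map_mx Num.conj A)^T.

Definition hermitian (N : nat) (A : 'M[C]_N) : Prop := adjmx A = A.

Definition psd (N : nat) (A : 'M[C]_N) : Prop :=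
  hermitian A /\ forall v : 'cV[C]_N, 0 <= (adjmx v *m A *m v) 0 0.

Definition loewner (N : nat) (A B : 'M[C]_N) : Prop := psd (B - A).

Definition density_matrix (N : nat) (rho : 'M[C]_N) : Prop :=
  psd rho /\ \tr rho = 1.

Definition unit_vector (N : nat) (psi : 'cV[C]_N) : Prop :=
  (adjmx psi *m psi) 0 0 = 1.
End MatrixDefs.

(* sum_s r(s) <= 1 for nonnegative r : every finite partial sum is <= 1 *)
Definition semi_measure (R : realType) (r : seq bool -> R) : Prop :=
  (forall s, 0 <= r s) /\
  (forall l : seq (seq bool), uniq l -> \sum_(s <- l) r s <= 1).

Definition lower_computable_semi_measure (R : realType) (r : seq bool -> R)
    : Prop :=
  semi_measure r /\
  exists f : nat -> seq bool -> rat,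
    total_recursive enc_ns repQ (fun p => f p.1 p.2) /\
    (forall n s, f n s <= f n.+1 s) /\
    (forall s, seq_cvg (fun n => ratr (f n s) : R) (r s)).

Definition universal_probability (R : realType) (m : seq bool -> R) : Prop :=
  lower_computable_semi_measure m /\
  forall r : seq bool -> R, lower_computable_semi_measure r ->
    exists c : R, 0 < c /\ forall s, c * r s <= m s.

Definition embedQMx (R : realType) (N : nat) (A : 'M[rat]_N * 'M[rat]_N)
    : 'M[(R : rcfType)[i]]_N :=
  map_mx (fun q => (ratr q : R)%:C%C) A.1 +
  map_mx (fun q => ('i * (ratr q : R)%:C)%C) A.2.

(* semi-POVM: 0 <= R(s) and sum_s R(s) <= I (every finite partial sum) *)
Definition semi_POVM (R : realType) (N : nat)
    (P : seq bool -> 'M[(R : rcfType)[i]]_N) : Prop :=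
  (forall s, psd (P s)) /\
  (forall l : seq (seq bool), uniq l -> loewner (\sum_(s <- l) P s) 1%:M).

Definition lower_computable_semi_POVM (R : realType) (N : nat)
    (P : seq bool -> 'M[(R : rcfType)[i]]_N) : Prop :=
  semi_POVM P /\
  exists f : nat -> seq bool -> 'M[rat]_N * 'M[rat]_N,
    total_recursive enc_ns (@repQMx N) (fun p => f p.1 p.2) /\
    (forall n s, loewner (embedQMx R (f n s)) (P s)) /\
    (forall s (i j : 'I_N),
        seq_cvg (fun n => embedQMx R (f n s) i j) (P s i j)).

(* Each diagonal entry [s |-> R(s)_jj] of a lower-computable semi-POVM is itself a
   lower-computable semi-measure: the running maxima of the rational [(j,j)]-entries
   of the approximations are computable and nondecreasing, lie below [R(s)_jj] because
   the approximations lie below [R(s)] in the Loewner order, and converge to it; and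
   [sum_s R(s)_jj <= I_jj = 1].  Universality of [m] bounds every [R(s)_jj], hence
   [tr R(s)], by a constant times [m(s)].  Finally every entry of a positive
   semi-definite [A] is bounded by [2 tr A], which bounds both [<psi|A|psi>] and
   [tr (rho A)] by a multiple of [tr A]. *)

From Pilot Require Import Defs.
From mathcomp Require Import all_boot all_order all_algebra.
From mathcomp Require Import reals complex.
From mathcomp Require Import zify ring lra.
Set Implicit Arguments.
Unset Strict Implicit.
Unset Printing Implicit Defensive.

Import Order.TTheory GRing.Theory Num.Theory.

Local Open Scope nat_scope.

Lemma mueval_eq e xs v w : mueval e xs v -> v = w -> mueval e xs w.
Proof. by move=> h <-. Qed.

Lemma mueval_zero xs v : v = 0 -> mueval MZero xs v.
Proof. move=> ->; exact: ev_zero. Qed.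

Lemma mueval_succ xs v : v = (nth 0 xs 0).+1 -> mueval MSucc xs v.
Proof. move=> ->; exact: ev_succ. Qed.

Lemma mueval_proj i xs v : v = nth 0 xs i -> mueval (MProj i) xs v.
Proof. move=> ->; exact: ev_proj. Qed.

(* Evaluation lemmas are stated as [v = value -> mueval e xs v], so that [eapply]
   works when the output is still an evar; [mu] evaluates a composite program
   structurally, using these lemmas through the [mueval] hint database. *)
Create HintDb mueval discriminated.

Ltac nth_refl :=
  match goal with |- _ = ?e => let e' := eval cbv [nth] in e in exact (erefl e') end.

Ltac mu := lazymatch goal with
  | |- muevalL [::] _ _ => exact: evL_nil
  | |- muevalL (_ :: _) _ _ => eapply evL_cons; [mu | mu]
  | |- mueval (MComp _ _) _ _ => eapply ev_comp; [mu | mu]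
  | |- mueval (MProj _) _ _ => eapply mueval_proj; nth_refl
  | |- mueval MZero _ _ => eapply mueval_zero; reflexivity
  | |- mueval MSucc _ _ => eapply mueval_succ; nth_refl
  | |- mueval _ _ _ => solve [auto with mueval | eassumption]
  end.

Definition mu_add := MPrimRec (MProj 0) (MComp MSucc [:: MProj 1]).

Lemma mueval_add n y xs v : v = n + y -> mueval mu_add (n :: y :: xs) v.
Proof.
move=> ->; elim: n => [|n IH]; first by apply: ev_prim0; mu.
by apply: ev_primS IH _; mu.
Qed.
#[local] Hint Extern 1 (mueval mu_add _ _) => eapply mueval_add; nth_refl : mueval.

Definition mu_mul := MPrimRec MZero (MComp mu_add [:: MProj 2; MProj 1]).

Lemma mueval_mul n y xs v : v = n * y -> mueval mu_mul (n :: y :: xs) v.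
Proof.
move=> ->; elim: n => [|n IH]; first by apply: ev_prim0; mu.
by apply: ev_primS IH _; apply: mueval_eq; [mu | rewrite mulSn].
Qed.
#[local] Hint Extern 1 (mueval mu_mul _ _) => eapply mueval_mul; nth_refl : mueval.

Definition mu_pred := MPrimRec MZero (MProj 0).

Lemma mueval_pred n xs v : v = n.-1 -> mueval mu_pred (n :: xs) v.
Proof.
move=> ->; elim: n => [|n IH]; first by apply: ev_prim0; mu.
by apply: ev_primS IH _; mu.
Qed.
#[local] Hint Extern 1 (mueval mu_pred _ _) => eapply mueval_pred; nth_refl : mueval.

Definition mu_sub := MPrimRec (MProj 0) (MComp mu_pred [:: MProj 1]).

Lemma mueval_sub y x xs v : v = x - y -> mueval mu_sub (y :: x :: xs) v.
Proof.
move=> ->; elim: y => [|y IH]; first by apply: ev_prim0; apply: mueval_eq; [mu | rewrite subn0].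
by apply: ev_primS IH _; apply: mueval_eq; [mu | rewrite subnS].
Qed.
#[local] Hint Extern 1 (mueval mu_sub _ _) => eapply mueval_sub; nth_refl : mueval.

Definition mu_tri := MPrimRec MZero (MComp mu_add [:: MProj 1; MComp MSucc [:: MProj 0]]).

Lemma mueval_tri n xs v : v = 'C(n.+1, 2) -> mueval mu_tri (n :: xs) v.
Proof.
move=> ->; elim: n => [|n IH]; first by apply: ev_prim0; mu.
by apply: ev_primS IH _; apply: mueval_eq; [mu | rewrite [RHS]binS bin1].
Qed.
#[local] Hint Extern 1 (mueval mu_tri _ _) => eapply mueval_tri; nth_refl : mueval.

Lemma pairNE a b : pairN a b = 'C((a + b).+1, 2) + b.
Proof. by rewrite /pairN bin2 divn2 mulnC. Qed.

Definition mu_pair := MComp mu_add [:: MComp mu_tri [:: mu_add]; MProj 1].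

Lemma mueval_pair a b xs v : v = pairN a b -> mueval mu_pair (a :: b :: xs) v.
Proof. by move=> ->; apply: mueval_eq; [rewrite /mu_pair; mu | rewrite pairNE]. Qed.
#[local] Hint Extern 1 (mueval mu_pair _ _) => eapply mueval_pair; nth_refl : mueval.

(* The least [k] with [z < 'C(k.+2, 2)]; on [z = pairN a b] this is [a + b]. *)
Definition mu_diag :=
  MMu (MComp mu_sub [:: MComp mu_tri [:: MComp MSucc [:: MProj 0]]; MComp MSucc [:: MProj 1]]).

Lemma mueval_diag a b xs v : v = a + b -> mueval mu_diag (pairN a b :: xs) v.
Proof.
move=> ->; apply: ev_mu.
  apply: mueval_eq; first mu.
  by apply/eqP; rewrite subn_eq0 pairNE [X in _ <= X]binS bin1 ltn_add2l ltnS leq_addl.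
move=> k lt_k_ab; exists ((pairN a b).+1 - 'C(k.+2, 2)).-1.
apply: mueval_eq; first mu.
rewrite prednK // subn_gt0 ltnS pairNE.
exact: leq_trans (leq_bin2l 2 (lt_k_ab : k.+2 <= (a + b).+1)) (leq_addr _ _).
Qed.
#[local] Hint Extern 1 (mueval mu_diag _ _) => eapply mueval_diag; nth_refl : mueval.

Definition mu_snd := MComp mu_sub [:: MComp mu_tri [:: mu_diag]; MProj 0].
Definition mu_fst := MComp mu_sub [:: mu_snd; mu_diag].

Lemma mueval_snd a b xs v : v = b -> mueval mu_snd (pairN a b :: xs) v.
Proof. by move=> ->; apply: mueval_eq; [rewrite /mu_snd; mu | rewrite pairNE addKn]. Qed.
#[local] Hint Extern 1 (mueval mu_snd _ _) => eapply mueval_snd; nth_refl : mueval.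

Lemma mueval_fst a b xs v : v = a -> mueval mu_fst (pairN a b :: xs) v.
Proof. by move=> ->; apply: mueval_eq; [rewrite /mu_fst; mu | rewrite addnK]. Qed.
#[local] Hint Extern 1 (mueval mu_fst _ _) => eapply mueval_fst; nth_refl : mueval.

Definition mu_head := MComp mu_fst [:: mu_pred].
Definition mu_tail := MComp mu_snd [:: mu_pred].

Lemma mueval_head x l xs : mueval mu_head (listcode (x :: l) :: xs) x.
Proof. by rewrite /mu_head; mu. Qed.

Lemma mueval_tail x l xs : mueval mu_tail (listcode (x :: l) :: xs) (listcode l).
Proof. by rewrite /mu_tail; mu. Qed.

Fixpoint mu_drop j := if j is j'.+1 then MComp (mu_drop j') [:: mu_tail] else MProj 0.

Lemma mueval_drop j vs xs : j <= size vs ->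
  mueval (mu_drop j) (listcode vs :: xs) (listcode (drop j vs)).
Proof.
elim: j vs xs => [|j IH] [|x l] xs //= le_j_l; try by apply: mueval_proj.
apply: (ev_comp (ys := [:: listcode l])); last exact: IH.
by apply: evL_cons; [exact: mueval_tail | exact: evL_nil].
Qed.

Definition mu_nth j := MComp mu_head [:: mu_drop j].

Lemma mueval_nth j vs xs : j < size vs -> mueval (mu_nth j) (listcode vs :: xs) (nth 0 vs j).
Proof.
move=> lt_j_vs; apply: (ev_comp (ys := [:: listcode (drop j vs)])).
  by apply: evL_cons; [exact/mueval_drop/ltnW | exact: evL_nil].
rewrite (drop_nth 0 lt_j_vs); exact: mueval_head.
Qed.

Definition mu_ifz := MPrimRec (MProj 0) (MProj 3).

Lemma mueval_ifz x a b xs v : v = (if x == 0 then a else b) -> mueval mu_ifz (x :: a :: b :: xs) v.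
Proof. by move=> ->; elim: x => [|x IH]; [apply: ev_prim0 | apply: ev_primS IH _]; mu. Qed.
#[local] Hint Extern 1 (mueval mu_ifz _ _) => eapply mueval_ifz; nth_refl : mueval.

Local Notation mu_qnum k := (MComp mu_fst [:: MComp mu_fst [:: MProj k]]).
Local Notation mu_qneg k := (MComp mu_snd [:: MComp mu_fst [:: MProj k]]).
Local Notation mu_qden k := (MComp mu_snd [:: MProj k]).
Local Notation mu_cross k l :=
  (MComp mu_add [:: MComp mu_mul [:: mu_qnum k; mu_qden l]; MComp mu_mul [:: mu_qneg l; mu_qden k]]).

Definition mu_ratmax := MComp mu_ifz [:: MComp mu_sub [:: mu_cross 1 0; mu_cross 0 1]; MProj 1; MProj 0].

Lemma mueval_ratmax_nat p1 m1 d1 p2 m2 d2 xs :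
  let v1 := pairN (pairN p1 m1) d1 in let v2 := pairN (pairN p2 m2) d2 in
  mueval mu_ratmax (v1 :: v2 :: xs)
    (if p1 * d2 + m2 * d1 <= p2 * d1 + m1 * d2 then v2 else v1).
Proof. by move=> v1 v2; apply: mueval_eq; [rewrite /mu_ratmax; mu | rewrite subn_eq0]. Qed.

Lemma total_recursive_mx_entry (A : Type) (encA : A -> nat) (N : nat)
    (F : A -> 'M[rat]_N * 'M[rat]_N) (i j : 'I_N) :
  total_recursive encA (@repQMx N) F -> total_recursive encA repQ (fun a => (F a).1 i j).
Proof.
move=> [e e_F]; exists (MComp (mu_nth (i * N + j)) [:: e]) => a.
have [v [ev_v [vs [v_vs [size_vs rep_vs]]]]] := e_F a.
exists (nth 0 vs (i * N + j)); split; last exact: (rep_vs i j).1.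
apply: (ev_comp (ys := [:: v])); first by apply: evL_cons; [exact: ev_v | exact: evL_nil].
rewrite v_vs; apply: mueval_nth; rewrite size_vs.
by have := ltn_ord i; have := ltn_ord j; nia.
Qed.

Local Open Scope ring_scope.

Lemma ler_natdiff_div (F : numFieldType) (p1 m1 d1 p2 m2 d2 : nat) :
    (0 < d1)%N -> (0 < d2)%N ->
  ((p1%:R - m1%:R) / d1%:R <= (p2%:R - m2%:R) / d2%:R :> F) =
  (p1 * d2 + m2 * d1 <= p2 * d1 + m1 * d2)%N.
Proof.
move=> d1_gt0 d2_gt0.
have d12_gt0 : 0 < (d1 * d2)%:R :> F by rewrite ltr0n muln_gt0 d1_gt0.
rewrite -(ler_pM2r d12_gt0) -(ler_nat F) !natrD !natrM.
have d1_neq0 : d1%:R != 0 :> F by rewrite pnatr_eq0 -lt0n.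
have d2_neq0 : d2%:R != 0 :> F by rewrite pnatr_eq0 -lt0n.
by rewrite -[LHS]subr_ge0 -[RHS]subr_ge0; congr (_ <= _); field; rewrite d1_neq0.
Qed.

Lemma mueval_ratmax v1 v2 q1 q2 xs : repQ v1 q1 -> repQ v2 q2 ->
  mueval mu_ratmax (v1 :: v2 :: xs) (if q1 <= q2 then v2 else v1).
Proof.
move=> [p1 [m1 [d1 [-> [d1_gt0 ->]]]]] [p2 [m2 [d2 [-> [d2_gt0 ->]]]]].
rewrite ler_natdiff_div //; exact: mueval_ratmax_nat.
Qed.

Lemma repQ_max v1 v2 q1 q2 : repQ v1 q1 -> repQ v2 q2 ->
  repQ (if q1 <= q2 then v2 else v1) (Num.max q1 q2).
Proof. by rewrite maxEle; case: ifP. Qed.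

Fixpoint runmax {disp} {T : orderType disp} (u : nat -> T) (n : nat) : T :=
  if n is n'.+1 then Order.max (runmax u n') (u n) else u 0%N.

Lemma runmax_attained {disp} {T : orderType disp} (u : nat -> T) n :
  exists k, runmax u n = u k.
Proof.
elim: n => [|n [k IH]] /=; first by exists 0%N.
by rewrite IH maxEle; case: ifP => _; [exists n.+1 | exists k].
Qed.

Lemma runmax_ge {disp} {T : orderType disp} (u : nat -> T) n : (u n <= runmax u n)%O.
Proof. by case: n => [|n] //=; rewrite le_max lexx orbT. Qed.

Lemma runmaxS {disp} {T : orderType disp} (u : nat -> T) n : (runmax u n <= runmax u n.+1)%O.
Proof. by rewrite /= le_max lexx. Qed.

Section RunningMaxRecursive.
Variables (q : nat -> seq bool -> rat) (e : mucode).
Hypothesis e_q : forall p, exists v, mueval e [:: enc_ns p] v /\ repQ v (q p.1 p.2).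

Definition mu_runmax :=
  MPrimRec (MComp e [:: MComp mu_pair [:: MZero; MProj 0]])
    (MComp mu_ratmax [:: MProj 1; MComp e [:: MComp mu_pair [:: MComp MSucc [:: MProj 0]; MProj 2]]]).

Lemma mueval_runmax n s xs :
  exists w, mueval mu_runmax (n :: strcode s :: xs) w /\ repQ w (runmax (q^~ s) n).
Proof.
elim: n => [|n [w [ev_w rep_w]]].
  by have [v [ev_v rep_v]] := e_q (0%N, s); exists v; split=> //; apply: ev_prim0; mu.
have [v [ev_v rep_v]] := e_q (n.+1, s).
exists (if runmax (q^~ s) n <= q n.+1 s then v else w); split; last exact: repQ_max.
by apply: ev_primS ev_w _; apply: (ev_comp (ys := [:: w; v])); [mu | exact: mueval_ratmax].
Qed.

End RunningMaxRecursive.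

Lemma total_recursive_runmax (q : nat -> seq bool -> rat) :
  total_recursive enc_ns repQ (fun p => q p.1 p.2) ->
  total_recursive enc_ns repQ (fun p => runmax (q^~ p.2) p.1).
Proof.
move=> [e e_q]; exists (MComp (mu_runmax e) [:: mu_fst; mu_snd]) => -[n s] /=.
have [w [ev_w rep_w]] := mueval_runmax e_q n s [::].
by exists w; split=> //; rewrite /enc_ns /=; mu.
Qed.

Section PsdBounds.
Variables (C : numClosedFieldType) (N : nat).
Implicit Types (A rho : 'M[C]_N) (u v psi : 'cV[C]_N) (i j : 'I_N).
Local Notation e_ i := (delta_mx i 0 : 'cV[C]_N).

Lemma adjmxD u v : adjmx (u + v) = adjmx u + adjmx v.
Proof. by rewrite /adjmx map_mxD linearD. Qed.

Lemma adjmxZ (x : C) v : adjmx (x *: v) = x^* *: adjmx v.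
Proof. by rewrite /adjmx map_mxZ linearZ. Qed.

Lemma adjmx_delta i : adjmx (e_ i) = delta_mx 0 i.
Proof. by apply/matrixP => a b; rewrite !mxE andbC conjC_nat. Qed.

Lemma form_delta A i j : (adjmx (e_ i) *m A *m e_ j) 0 0 = A i j.
Proof. by rewrite adjmx_delta -rowE -colE !mxE. Qed.

Lemma form_delta2 A i j (x y : C) :
  let v := x *: e_ i + y *: e_ j in
  (adjmx v *m A *m v) 0 0 =
  x^* * x * A i i + x^* * y * A i j + y^* * x * A j i + y^* * y * A j j.
Proof.
rewrite /= adjmxD !adjmxZ !mulmxDl !mulmxDr -!scalemxAl -!scalemxAr !mxE.
have formE a b : \sum_k (adjmx (e_ a) *m A) 0 k * e_ b k 0 = A a b.
  by rewrite -form_delta mxE.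
by rewrite !formE; ring.
Qed.

Lemma psd_diag_ge0 A i : psd A -> 0 <= A i i.
Proof. by move=> [_ A_ge0]; have := A_ge0 (e_ i); rewrite form_delta. Qed.

Lemma hermitian_conj A i j : Defs.hermitian A -> (A i j)^* = A j i.
Proof. by move=> A_herm; rewrite -{2}A_herm /adjmx !mxE. Qed.

Lemma psd_entry_le A i j : psd A -> `|A i j| <= A i i + A j j.
Proof.
move=> A_psd; have Aii_ge0 := psd_diag_ge0 i A_psd; have Ajj_ge0 := psd_diag_ge0 j A_psd.
set z := A i j; have [->|z_neq0] := eqVneq z 0; first by rewrite normr0 addr_ge0.
have nz_gt0 : 0 < `|z| by rewrite normr_gt0.
have Aji : A j i = z^* by rewrite /z hermitian_conj //; case: A_psd.
(* Test positivity on [|z| e_i - z^* e_j]: the form is [|z|^2 (A i i + A j j - 2 |z|)]. *)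
have := A_psd.2 (`|z| *: e_ i + (- z^*) *: e_ j).
rewrite form_delta2 conj_normC !rmorphN /= conjCK Aji -/z.
have -> : `|z| * `|z| * A i i + `|z| * - z^* * z + - z * `|z| * z^* + - z * - z^* * A j j =
    `|z| ^+ 2 * (A i i + A j j - 2 * `|z|) + (z * z^* - `|z| ^+ 2) * (A j j - 2 * `|z|).
  by ring.
rewrite -normCK subrr mul0r addr0 pmulr_rge0 ?exprn_gt0 // subr_ge0.
by apply: le_trans; rewrite mulr2n mulrDl mul1r lerDl ltW.
Qed.

Lemma psd_diag_le_trace A i : psd A -> A i i <= \tr A.
Proof.
move=> A_psd; rewrite /mxtrace (bigD1 i) //= lerDl.
by apply: sumr_ge0 => k _; exact: psd_diag_ge0.
Qed.

Lemma psd_entry_le_trace A i j : psd A -> `|A i j| <= \tr A *+ 2.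
Proof.
move=> A_psd; apply: le_trans (psd_entry_le i j A_psd) _.
by rewrite mulr2n lerD // psd_diag_le_trace.
Qed.

Lemma unit_vector_entry_le1 psi i : unit_vector psi -> `|psi i 0| <= 1.
Proof.
rewrite /unit_vector !mxE => psi_unit.
have sum_sq : \sum_a `|psi a 0| ^+ 2 = 1.
  by rewrite -psi_unit; apply: eq_bigr => a _; rewrite normCKC !mxE.
rewrite -(@expr_le1 _ 2) // -sum_sq (bigD1 i) //= lerDl.
by apply: sumr_ge0 => a _; exact: exprn_ge0.
Qed.

Lemma form_le_trace A psi : psd A -> unit_vector psi ->
  (adjmx psi *m A *m psi) 0 0 <= \tr A *+ (2 * N * N).
Proof.
move=> A_psd psi_unit.
have form_ge0 : 0 <= (adjmx psi *m A *m psi) 0 0 by exact: A_psd.2.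
have formE : (adjmx psi *m A *m psi) 0 0 = \sum_b (\sum_a (psi a 0)^* * A a b) * psi b 0.
  by rewrite !mxE; apply: eq_bigr => b _; rewrite !mxE; congr (_ * _);
     apply: eq_bigr => a _; rewrite !mxE.
rewrite -(ger0_norm form_ge0) formE !mulrnA.
have -> : \tr A *+ 2 *+ N *+ N = \sum_(b < N) \sum_(a < N) \tr A *+ 2.
  by rewrite !sumr_const card_ord.
apply: le_trans (ler_norm_sum _ _ _) _; apply: ler_sum => b _.
rewrite normrM -[X in _ <= X]mulr1; apply: ler_pM => //; last exact: unit_vector_entry_le1.
apply: le_trans (ler_norm_sum _ _ _) _; apply: ler_sum => a _.
rewrite normrM norm_conjC -[X in _ <= X]mul1r.
by apply: ler_pM => //; [exact: unit_vector_entry_le1 | exact: psd_entry_le_trace].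
Qed.

Lemma trace_mul_le_trace A rho : psd A -> density_matrix rho ->
  \tr (rho *m A) <= \tr A *+ (4 * N * N).
Proof.
move=> A_psd [rho_psd tr_rho].
have trE : \tr (rho *m A) = \sum_i \sum_j rho i j * A j i.
  by apply: eq_bigr => i _; rewrite mxE.
have tr_real : \tr (rho *m A) \is Num.real.
  apply/CrealP; rewrite trE rmorph_sum exchange_big; apply: eq_bigr => i _.
  rewrite rmorph_sum; apply: eq_bigr => j _.
  by rewrite rmorphM /= !hermitian_conj //; [case: A_psd | case: rho_psd].
apply: le_trans (real_ler_norm tr_real) _; rewrite trE !mulrnA.
have -> : \tr A *+ 4 *+ N *+ N = \sum_(i < N) \sum_(j < N) 2 * (\tr A *+ 2).
  by rewrite !sumr_const card_ord mulr_natl -(mulrnA (\tr A) 2 2).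
apply: le_trans (ler_norm_sum _ _ _) _; apply: ler_sum => i _.
apply: le_trans (ler_norm_sum _ _ _) _; apply: ler_sum => j _.
have rho_ij : `|rho i j| <= 2%:R by rewrite -tr_rho; exact: psd_entry_le_trace.
by rewrite normrM; apply: ler_pM => //; exact: psd_entry_le_trace.
Qed.

End PsdBounds.

Lemma seq_cvg_squeeze (K : realFieldType) (a b : nat -> K) (l : K) :
  (forall n, a n <= b n) -> (forall n, b n <= l) -> seq_cvg a l -> seq_cvg b l.
Proof.
move=> le_ab le_bl a_cvg e e_gt0; have [n0 a_near] := a_cvg e e_gt0.
exists n0 => n le_n0n; have := a_near n le_n0n.
have := le_ab n; have := le_bl n.
by rewrite !ler0_norm ?subr_le0 //; [lra | exact: le_trans (le_bl n)].
Qed.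

Lemma normcR (R : rcfType) (x : R) : `|x%:C%C| = (`|x|)%:C%C.
Proof. by rewrite normc_def /= expr0n addr0 sqrtr_sqr. Qed.

Lemma seq_cvgcR (R : rcfType) (a : nat -> R) (b : nat -> R[i]) (l : R) :
  (forall n, b n = (a n)%:C%C) -> seq_cvg b l%:C%C -> seq_cvg a l.
Proof.
move=> bE b_cvg e e_gt0; have [|n0 b_near] := b_cvg e%:C%C; first by rewrite ltcR.
by exists n0 => n /b_near; rewrite bE -rmorphB /= normcR ltcR.
Qed.

Section PovmDiagonal.
Variables (R : realType) (N : nat) (P : seq bool -> 'M[(R : rcfType)[i]]_N).
Hypothesis P_psd : forall s, psd (P s).

Definition povm_diag (j : 'I_N) (s : seq bool) : R := complex.Re (P s j j).

Lemma povm_diagE j s : (povm_diag j s)%:C%C = P s j j.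
Proof. by apply: RRe_real; apply: ger0_real; exact: psd_diag_ge0. Qed.

Lemma povm_diag_ge0 j s : 0 <= povm_diag j s.
Proof. by rewrite -(lecR 0) povm_diagE; exact: psd_diag_ge0. Qed.

Lemma povm_diag_semi_measure j : semi_POVM P -> semi_measure (povm_diag j).
Proof.
move=> [_ P_le1]; split=> [s | l l_uniq]; first exact: povm_diag_ge0.
rewrite -lecR rmorph_sum rmorph1 /=; under eq_bigr do rewrite povm_diagE.
have := psd_diag_ge0 j (P_le1 l l_uniq).
by rewrite mxE [X in _ + X]mxE summxE mxE eqxx mulr1n subr_ge0.
Qed.

Lemma embedQMx_diag_le (F : 'M[rat]_N * 'M[rat]_N) j s :
  loewner (embedQMx R F) (P s) ->
  embedQMx R F j j = (ratr (F.1 j j) : R)%:C%C /\ ratr (F.1 j j) <= povm_diag j s.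
Proof.
move=> /(psd_diag_ge0 j); rewrite !mxE -povm_diagE lecE /=; simpc.
move=> /andP[/eqP Im_eq0 Re_ge0].
have -> : ratr (F.2 j j) = 0 :> R by apply/eqP; rewrite -oppr_eq0 Im_eq0.
by split=> //; rewrite -subr_ge0.
Qed.

Lemma lower_computable_povm_diag j :
  lower_computable_semi_POVM P -> lower_computable_semi_measure (povm_diag j).
Proof.
move=> [P_POVM [f [f_rec [f_le f_cvg]]]].
split; first exact: povm_diag_semi_measure.
pose q k s := (f k s).1 j j.
exists (fun n s => runmax (q^~ s) n); split.
  exact/total_recursive_runmax/(total_recursive_mx_entry (F := fun p => f p.1 p.2)).
split=> [n s | s]; first exact: runmaxS.
apply: (seq_cvg_squeeze (a := fun n => ratr (q n s))).
- by move=> n; rewrite ler_rat runmax_ge.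
- by move=> n; have [k ->] := runmax_attained (q^~ s) n; exact: (embedQMx_diag_le j (f_le k s)).2.
- apply: (seq_cvgcR (fun n => (embedQMx_diag_le j (f_le n s)).1)).
  by rewrite povm_diagE; exact: f_cvg.
Qed.

End PovmDiagonal.

Lemma trace_le_universal (R : realType) (N : nat) (m : seq bool -> R)
    (P : seq bool -> 'M[(R : rcfType)[i]]_N) :
  universal_probability m -> lower_computable_semi_POVM P ->
  exists c : R, 0 < c /\ forall s, \tr (P s) <= (c * m s)%:C%C.
Proof.
move=> [[[m_ge0 _] _] m_univ] P_lc; have P_psd := P_lc.1.1.
have [c c_dom] := fin_all_exists (fun j => m_univ _ (lower_computable_povm_diag P_psd j P_lc)).
have cV_ge0 j : 0 <= (c j)^-1 by rewrite invr_ge0 ltW // (c_dom j).1.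
exists (1 + \sum_j (c j)^-1); split=> [|s].
  by rewrite ltr_wpDr // sumr_ge0.
rewrite /mxtrace; under eq_bigr do rewrite -(povm_diagE P_psd).
rewrite -rmorph_sum lecR mulrDl mul1r ler_wpDl // mulr_suml.
by apply: ler_sum => j _; rewrite ler_pdivlMl ?(c_dom j).1 ?(c_dom j).2.
Qed.

Theorem mainTheorem5 (R : realType) (N : nat) (hN : (0 < N)%N)
    (m : seq bool -> R) (P : seq bool -> 'M[(R : rcfType)[i]]_N) :
  universal_probability m -> lower_computable_semi_POVM P ->
  (exists c : R, 0 < c /\
     forall (psi : 'cV[(R : rcfType)[i]]_N) (s : seq bool),
       unit_vector psi ->
       (adjmx psi *m P s *m psi) 0 0 <= (c * m s)%:C%C) /\
  (exists c : R, 0 < c /\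
     forall (rho : 'M[(R : rcfType)[i]]_N) (s : seq bool),
       density_matrix rho ->
       \tr (rho *m P s) <= (c * m s)%:C%C).
Proof.
move=> m_univ P_lc; have P_psd := P_lc.1.1.
have [c [c_gt0 trP_le]] := trace_le_universal m_univ P_lc.
split.
  exists (c *+ (2 * N * N)); split=> [|psi s psi_unit].
    by rewrite pmulrn_lgt0 // !muln_gt0 hN.
  apply: le_trans (form_le_trace (P_psd s) psi_unit) _.
  by rewrite mulrnAl rmorphMn ler_wMn2r.
exists (c *+ (4 * N * N)); split=> [|rho s rho_density].
  by rewrite pmulrn_lgt0 // !muln_gt0 hN.
apply: le_trans (trace_mul_le_trace (P_psd s) rho_density) _.
by rewrite mulrnAl rmorphMn ler_wMn2r.
Qed.
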